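(* Let $r_1,\dots,r_n\in\mathbb R$ and $r=\mathrm{diag}(r_1,\dots,r_n)$. For each $1\le i,k\le n$, the polynomials $\sigma_k(r+tI)$ (of degree $k$) and $q_{i,k}(t)$ (of degree $k-1$) have only real roots.
   Context: $\sigma_k(r+tI)=\sum_{i_1<\cdots<i_k}(t+r_{i_1})\cdots(t+r_{i_k})$, and $q_{i,k}(t)=\sum_{j=0}^{k-1}(-1)^j\sigma_{k-1-j}(r+tI)(t+r_i)^j$ with $\sigma_0=1$. *)

From HB Require Import structures.
From mathcomp Require Import all_boot all_order all_algebra.
Set Implicit Arguments. Unset Strict Implicit. Unset Printing Implicit Defensive.
Import Order.TTheory GRing.Theory Num.Theory.
Local Open Scope ring_scope.

(* sigma_k(r + t I) as a polynomial in t: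
   sum over k-subsets A of {0..n-1} of prod_{j in A} (t + r_j).
   For k = 0 this is 1 (empty product over the empty set). *)
Definition sigma_shift (C : numClosedFieldType) (n : nat) (r : 'I_n -> C)
    (k : nat) : {poly C} :=
  \sum_(A : {set 'I_n} | #|A| == k) \prod_(j in A) ('X + (r j)%:P).

Definition q_poly (C : numClosedFieldType) (n : nat) (r : 'I_n -> C)
    (i : 'I_n) (k : nat) : {poly C} :=
  \sum_(j < k) ((-1) ^+ j *: (sigma_shift r (k.-1 - j) * ('X + (r i)%:P) ^+ j)).

Definition only_real_roots (C : numClosedFieldType) (p : {poly C}) : Prop :=
  forall z : C, root p z -> z \is Num.real.

From HB Require Import structures.
From mathcomp Require Import all_boot all_order all_algebra.
From mathcomp Require Import ring zify.
Set Implicit Arguments. Unset Strict Implicit. Unset Printing Implicit Defensive.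
Import Order.TTheory GRing.Theory Num.Theory.
Local Open Scope ring_scope.

(* Over an index set [S], differentiating [sigma_(m+1)(r + tI)] gives
   [(#|S| - m) sigma_m(r + tI)], so every [sigma_m] is a nonzero multiple of a
   derivative of [\prod_(j in S) (t + r_j)], whose roots are real; derivatives
   of real-rooted polynomials are real-rooted, since at a root [z] of [p'] that
   is not a root of [p] we have [p'/p (z) = \sum_a (z - a)^-1 = 0].  Deleting
   the index [i] gives [sigma_(m+1)(S) = sigma_(m+1)(S :\ i) + (t + r_i)
   sigma_m(S :\ i)], under which [q_(i,k)] telescopes to [sigma_(k-1)(S :\ i)]. *)

Lemma size_deriv_num (R : numDomainType) (p : {poly R}) :
  size p^`() = (size p).-1.
Proof.
have [lep1|lt1p] := leqP (size p) 1.
  by rewrite {1}[p]size1_polyC // derivC size_poly0 -subn1 (eqnP lep1).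
rewrite size_poly_eq // mulrn_eq0 -subn2 -subSn // subn2.
by rewrite lead_coef_eq0 -size_poly_eq0 -(subnKC lt1p).
Qed.

Lemma deriv_prod_set (R : comNzRingType) (I : finType) (A : {set I})
    (f : I -> {poly R}) :
  (\prod_(j in A) f j)^`() = \sum_(j in A) (f j)^`() * \prod_(l in A :\ j) f l.
Proof.
move: {2}#|A| (erefl #|A|) => m; elim: m A => [|m IH] A cardA.
  by move/eqP: cardA; rewrite cards_eq0 => /eqP ->; rewrite !big_set0 derivE.
have [a Aa] : exists a, a \in A by apply/set0Pn; rewrite -card_gt0 cardA.
rewrite (big_setD1 a) //= derivM IH; last first.
  by move: cardA; rewrite (cardsD1 a) Aa add1n => -[].
rewrite [RHS](big_setD1 a) //=; congr (_ + _).
rewrite mulr_sumr; apply: eq_bigr => j; rewrite in_setD1 => /andP[ja _].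
rewrite mulrCA [in RHS](big_setD1 a) /=; last by rewrite in_setD1 eq_sym ja Aa.
by rewrite !setDDl setUC.
Qed.

Lemma horner_deriv_prod_XsubC (F : fieldType) (s : seq F) (z : F) :
  (\prod_(a <- s) ('X - a%:P)).[z] != 0 ->
  (\prod_(a <- s) ('X - a%:P))^`().[z] =
  (\prod_(a <- s) ('X - a%:P)).[z] * \sum_(a <- s) (z - a)^-1.
Proof.
elim: s => [|a s IH]; first by rewrite !big_nil derivE !hornerE.
rewrite !big_cons derivM derivXsubC mul1r !hornerE mulf_eq0 negb_or.
case/andP=> za0 hs; rewrite IH // mulrDr mulrA; congr (_ + _).
by rewrite mulrAC divff // mul1r.
Qed.

(* The imaginary parts of the [(z - a)^-1], [a] real, all have the sign
   of [- 'Im z], so they cannot cancel unless [z] is real. *)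
Lemma sum_inv_sub_eq0_real (C : numClosedFieldType) (s : seq C) (z : C) :
  s != [::] -> {in s, forall a, a \is Num.real} ->
  \sum_(a <- s) (z - a)^-1 = 0 -> z \is Num.real.
Proof.
move=> s_neq0 s_real sum0.
have [/s_real //|zNs] := boolP (z \in s).
have za a : a \in s -> z - a != 0.
  by move=> sa; rewrite subr_eq0; apply: contraNneq zNs => ->.
have conj_sum0 : \sum_(a <- s) (z^* - a)^-1 = 0.
  transitivity ((\sum_(a <- s) (z - a)^-1)^*); last by rewrite sum0 conjC0.
  rewrite rmorph_sum; apply: eq_big_seq => a sa.
  by rewrite fmorphV rmorphB /= (conj_Creal (s_real a sa)).
have : (z^* - z) * \sum_(a <- s) `|z - a| ^- 2 = 0.
  transitivity (\sum_(a <- s) ((z - a)^-1 - (z^* - a)^-1)); last first.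
    by rewrite sumrB sum0 conj_sum0 subrr.
  rewrite mulr_sumr; apply: eq_big_seq => a sa.
  have aR := conj_Creal (s_real a sa).
  have za' : z^* - a != 0 by rewrite -aR -rmorphB conjC_eq0 za.
  by rewrite normCK rmorphB /= aR; field; rewrite za // za'.
move/eqP; rewrite mulf_eq0 subr_eq0 => /orP[/eqP/CrealP//|].
rewrite psumr_eq0 => [|a _]; last by rewrite invr_ge0 exprn_ge0.
case: s s_neq0 za {s_real sum0 conj_sum0 zNs} => [//|a s] _ za.
move/allP/(_ a (mem_head _ _)); rewrite invr_eq0 expf_eq0 /= normr_eq0.
by rewrite (negbTE (za a (mem_head _ _))).
Qed.

Lemma real_rooted_deriv (C : numClosedFieldType) (p : {poly C}) :
  p^`() != 0 -> only_real_roots p -> only_real_roots p^`().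
Proof.
move=> dp_neq0 p_real z /rootP dpz0.
have [/rootP/p_real//|pz_neq0] := eqVneq p.[z] 0.
have [s def_p] := closed_field_poly_normal p.
set Q := \prod_(a <- s) _ in def_p.
have lc_neq0 : lead_coef p != 0.
  by rewrite lead_coef_eq0; apply: contraNneq dp_neq0 => ->; rewrite deriv0.
have Qz_neq0 : Q.[z] != 0.
  by apply: contraNneq pz_neq0; rewrite def_p hornerZ => ->; rewrite mulr0.
apply: (@sum_inv_sub_eq0_real _ s).
- apply: contraNneq dp_neq0 => s0.
  by rewrite def_p /Q s0 big_nil derivZ derivC scaler0.
- by move=> a sa; apply: p_real; rewrite def_p rootZ // root_prod_XsubC.
- move: dpz0; rewrite def_p derivZ hornerZ horner_deriv_prod_XsubC //.
  by move/eqP; rewrite !mulf_eq0 (negbTE lc_neq0) (negbTE Qz_neq0) => /eqP.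
Qed.

Lemma big_setD1_card (R : nmodType) (I : finType) (S : {set I}) (j : I)
    (m : nat) (G : {set I} -> R) :
  j \in S ->
  \sum_(A : {set I} | (A \subset S) && (#|A| == m.+1) && (j \in A)) G A =
  \sum_(B : {set I} | (B \subset S :\ j) && (#|B| == m)) G (j |: B).
Proof.
move=> Sj; rewrite (reindex_onto (fun B => j |: B) (fun A => A :\ j)) /=; last first.
  by move=> A /andP[_ Aj]; rewrite setD1K.
apply: eq_bigl => B; rewrite setU11 andbT subsetD1.
have [Bj|Bj] := boolP (j \in B).
  rewrite (setUidPr _) ?sub1set // !andbF.
  apply/negbTE/negP => /andP[_ /eqP B_eq].
  by move: Bj; rewrite -B_eq setD11.
by rewrite setU1K // eqxx andbT subUset sub1set Sj cardsU1 Bj add1n eqSS andbT.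
Qed.

Section ShiftedSymmetric.
Variables (C : numClosedFieldType) (n : nat) (r : 'I_n -> C).
Local Notation F j := ('X + (r j)%:P).

Definition sigma_shift_on (S : {set 'I_n}) (m : nat) : {poly C} :=
  \sum_(A : {set 'I_n} | (A \subset S) && (#|A| == m)) \prod_(j in A) F j.

Lemma sigma_shiftE (m : nat) : sigma_shift r m = sigma_shift_on setT m.
Proof. by apply: eq_bigl => A; rewrite subsetT. Qed.

Lemma sigma_shift_on_card (S : {set 'I_n}) :
  sigma_shift_on S #|S| = \prod_(j in S) F j.
Proof.
rewrite /sigma_shift_on (bigD1 S) /=; last by rewrite subxx eqxx.
rewrite [X in _ + X]big1 ?addr0 // => A /andP[/andP[sAS /eqP cardA] /negP[]].
by rewrite eqEcard sAS cardA leqnn.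
Qed.

Lemma sigma_shift_on0 (S : {set 'I_n}) : sigma_shift_on S 0 = 1.
Proof.
rewrite /sigma_shift_on (eq_bigl (pred1 set0)) ?big_pred1_eq ?big_set0 // => A.
by rewrite cards_eq0 /=; case: eqP => [->|]; rewrite ?sub0set ?andbF.
Qed.

Lemma sigma_shift_on_split (S : {set 'I_n}) (i : 'I_n) (m : nat) : i \in S ->
  sigma_shift_on S m.+1 =
  sigma_shift_on (S :\ i) m.+1 + F i * sigma_shift_on (S :\ i) m.
Proof.
move=> Si; rewrite /sigma_shift_on (bigID (fun A : {set _} => i \in A)) /= addrC.
congr (_ + _).
  apply: eq_bigl => A; rewrite subsetD1.
  by case: (A \subset S) (i \in A) (#|A| == m.+1) => [] [] [].
rewrite big_setD1_card // mulr_sumr; apply: eq_bigr => B /andP[].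
by rewrite subsetD1 => /andP[_ Bi] _; rewrite big_setU1.
Qed.

Lemma deriv_sigma_shift_on (S : {set 'I_n}) (m : nat) :
  (sigma_shift_on S m.+1)^`() = \sum_(j in S) sigma_shift_on (S :\ j) m.
Proof.
rewrite /sigma_shift_on raddf_sum /=.
under eq_bigr do rewrite deriv_prod_set.
rewrite (exchange_big_dep (mem S)) /= => [|A j /andP[sAS _]]; last first.
  by move=> Aj; apply: (subsetP sAS).
apply: eq_bigr => j Sj; rewrite big_setD1_card //.
by apply: eq_bigr => B /andP[]; rewrite subsetD1 => /andP[_ Bj] _;
  rewrite derivD derivX derivC addr0 mul1r setU1K.
Qed.

(* Each [m]-subset [B] of [S] arises from exactly [#|S| - m] deletions [S :\ j]. *)
Lemma sum_sigma_shift_on_setD1 (S : {set 'I_n}) (m : nat) :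
  \sum_(j in S) sigma_shift_on (S :\ j) m = (#|S| - m)%:R *: sigma_shift_on S m.
Proof.
pose P (B : {set 'I_n}) := (B \subset S) && (#|B| == m).
rewrite /sigma_shift_on (exchange_big_dep P) /=; last first.
  by move=> j B Sj /andP[]; rewrite /P subsetD1 => /andP[-> _] ->.
rewrite scaler_sumr; apply: eq_bigr => B /andP[sBS /eqP cardB].
have -> : (#|S| - m = #|S :\: B|)%N by rewrite cardsD (setIidPr sBS) cardB.
rewrite scaler_nat -sumr_const; apply: eq_bigl => j.
by rewrite subsetD1 sBS cardB eqxx in_setD andbT andbC.
Qed.

Lemma sigma_shift_on_deriv (S : {set 'I_n}) (m : nat) : (m < #|S|)%N ->
  sigma_shift_on S m = (#|S| - m)%:R^-1 *: (sigma_shift_on S m.+1)^`().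
Proof.
move=> ltmS; rewrite deriv_sigma_shift_on sum_sigma_shift_on_setD1 scalerA.
by rewrite mulVf ?scale1r // pnatr_eq0 subn_eq0 -ltnNge.
Qed.

Lemma alt_sum_sigma_shift_on (S : {set 'I_n}) (i : 'I_n) (m : nat) : i \in S ->
  \sum_(j < m.+1) ((-1) ^+ j *: (sigma_shift_on S (m - j) * F i ^+ j)) =
  sigma_shift_on (S :\ i) m.
Proof.
move=> Si; elim: m => [|m IH].
  by rewrite big_ord1 !sigma_shift_on0 expr0 mulr1 scale1r.
rewrite big_ord_recl subn0 expr0 mulr1 scale1r (sigma_shift_on_split m Si).
rewrite -[RHS]addr0 -addrA; congr (_ + _); rewrite -IH mulr_sumr -big_split.
rewrite big1 // => j _; rewrite lift0 subSS !exprS mulN1r scaleNr.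
by rewrite -scalerAr mulrCA /= addrN.
Qed.

Hypothesis r_real : forall j, r j \is Num.real.

Lemma sigma_shift_on_real_rooted (S : {set 'I_n}) (m : nat) : (m <= #|S|)%N ->
  size (sigma_shift_on S m) = m.+1 /\ only_real_roots (sigma_shift_on S m).
Proof.
move=> lemS; rewrite -(subKn lemS).
elim: (#|S| - m)%N (leq_subr m #|S|) => [|d IH] ltdS.
  rewrite subn0 sigma_shift_on_card; split.
    rewrite size_prod => [|j _]; last by rewrite -size_poly_eq0 size_XaddC.
    rewrite (eq_bigr (fun=> 2%N)) => [|j _]; last exact: size_XaddC.
    by rewrite sum_nat_const (@eq_card _ _ S) //; lia.
  move=> z /rootP; rewrite horner_prod => /eqP/prodf_eq0[j _].
  by move/eqP/rootP; rewrite root_XaddC => /eqP ->; rewrite rpredN.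
set m' := (#|S| - d.+1)%N.
have ltmS : (m' < #|S|)%N by rewrite /m'; lia.
have [size_succ real_succ] : size (sigma_shift_on S m'.+1) = m'.+2 /\
    only_real_roots (sigma_shift_on S m'.+1).
  have succE : (#|S| - d = m'.+1)%N by rewrite /m'; lia.
  by rewrite -succE; apply/IH/ltnW.
have c_neq0 : (#|S| - m')%:R^-1 != 0 :> C.
  by rewrite invr_eq0 pnatr_eq0 subn_eq0 -ltnNge.
have size_deriv : size (sigma_shift_on S m'.+1)^`() = m'.+1.
  by rewrite size_deriv_num size_succ.
rewrite sigma_shift_on_deriv //; split=> [|z]; first by rewrite size_scale.
rewrite rootZ //; apply: real_rooted_deriv => //.
by rewrite -size_poly_eq0 size_deriv.
Qed.

End ShiftedSymmetric.

Theorem lemma2p7 (C : numClosedFieldType) (n : nat) (r : 'I_n -> C)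
    (hr : forall j, r j \is Num.real) (i : 'I_n) (k : nat)
    (hk1 : (1 <= k)%N) (hkn : (k <= n)%N) :
  [/\ size (sigma_shift r k) = k.+1,
      only_real_roots (sigma_shift r k),
      size (q_poly r i k) = k
    & only_real_roots (q_poly r i k)].
Proof.
case: k hk1 hkn => [//|m] _ lt_m_n.
have qE : q_poly r i m.+1 = sigma_shift_on r (setT :\ i) m.
  rewrite -(alt_sum_sigma_shift_on r m (in_setT i)).
  by apply: eq_bigr => j _; rewrite sigma_shiftE.
have [size_sigma real_sigma] : size (sigma_shift_on r setT m.+1) = m.+2 /\
    only_real_roots (sigma_shift_on r setT m.+1).
  by apply: sigma_shift_on_real_rooted; rewrite // cardsT card_ord.
have [size_q real_q] : size (sigma_shift_on r (setT :\ i) m) = m.+1 /\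
    only_real_roots (sigma_shift_on r (setT :\ i) m).
  apply: sigma_shift_on_real_rooted => //.
  have := cardsD1 i [set: 'I_n]; rewrite in_setT cardsT card_ord add1n.
  by move=> n_eq; rewrite -ltnS -n_eq.
by rewrite qE sigma_shiftE.
Qed.
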